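(* Let $\mathcal{H}$ be a real Hilbert space, $N\ge2$, $A_1:\mathcal{H}\rightrightarrows\mathcal{H}$ maximally monotone, and for $\delta,\gamma\in\mathbb{R}_{++}$ define $\tilde{\mathcal{Q}}_{\delta\leftarrow\gamma}=(\tilde{\mathcal{Q}}^1_{\delta\leftarrow\gamma},\dots,\tilde{\mathcal{Q}}^{N-1}_{\delta\leftarrow\gamma}):\mathcal{H}^{N-1}\to\mathcal{H}^{N-1}$ by $\tilde{\mathcal{Q}}^1_{\delta\leftarrow\gamma}\mathbf{x}=\frac{\delta}{\gamma}x^1+(1-\frac{\delta}{\gamma})J_{\gamma A_1}x^1$ and $\tilde{\mathcal{Q}}^i_{\delta\leftarrow\gamma}\mathbf{x}=\frac{\delta}{\gamma}(x^i-x^1)+\tilde{\mathcal{Q}}^1_{\delta\leftarrow\gamma}\mathbf{x}$ for $i=2,\dots,N-1$, where $\mathbf{x}=(x^1,\dots,x^{N-1})$. Then $\tilde{\mathcal{Q}}_{\delta\leftarrow\gamma}$ is Lipschitz continuous (with respect to the product norm on $\mathcal{H}^{N-1}$) with constant $$\check{\mathcal{L}}_{\delta\leftarrow\gamma}=\frac{\sqrt{\delta}}{\sqrt{\gamma}}+\frac{\sqrt{|\gamma-\delta|}}{\sqrt{\gamma}}\max\Big\{\sqrt{N-1},\ \sqrt{2N}\sqrt{\tfrac{\delta}{\gamma}}\Big\}.$$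
   Context: $J_{A}=(\mathrm{Id}+A)^{-1}$ is the resolvent; the norm on $\mathcal{H}^{N-1}$ is $\|\mathbf{x}\|^2=\sum_{i=1}^{N-1}\|x^i\|^2$. *)

From HB Require Import structures.
From mathcomp Require Import all_boot all_order all_algebra.
From mathcomp Require Import all_classical all_reals all_analysis.
Set Implicit Arguments. Unset Strict Implicit. Unset Printing Implicit Defensive.
Import Order.TTheory GRing.Theory Num.Theory.
Import numFieldNormedType.Exports.
Local Open Scope classical_set_scope.
Local Open Scope ring_scope.

(* A real Hilbert space is a complete normed space H whose norm comes from an
   inner product [ip]: symmetric, linear in the first argument, ip x x = |x|^2. *)
Definition is_inner_product (R : realType) (H : normedModType R)
  (ip : H -> H -> R) : Prop :=
  [/\ (forall x y, ip x y = ip y x),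
      (forall (a : R) x y z, ip (a *: x + y) z = a * ip x z + ip y z)
    & (forall x, ip x x = `|x| ^+ 2)].

Definition monotone_op (R : realType) (H : normedModType R)
  (ip : H -> H -> R) (A : H -> set H) : Prop :=
  forall x y u v, A x u -> A y v -> 0 <= ip (x - y) (u - v).

Definition maximally_monotone (R : realType) (H : normedModType R)
  (ip : H -> H -> R) (A : H -> set H) : Prop :=
  monotone_op ip A /\
  forall B : H -> set H, monotone_op ip B ->
    (forall x u, A x u -> B x u) -> forall x u, B x u -> A x u.

(* Resolvent J_{gamma A} = (Id + gamma A)^{-1}, as a (chosen) function:
   J x is a point p with x \in p + gamma A p (unique when A is maximally monotone
   and gamma > 0, by Minty's theorem). *)
Definition resolvent (R : realType) (H : completeNormedModType R)
  (gamma : R) (A : H -> set H) (x : H) : H :=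
  xget 0 [set p | exists2 u, A p u & x = p + gamma *: u].

(* The first index (x^1) of 'I_n, obtained from any inhabitant. *)
Definition ord_first (n : nat) (i : 'I_n) : 'I_n :=
  Ordinal (leq_ltn_trans (leq0n i) (ltn_ord i)).

(* Q~^1 x = (d/g) x^1 + (1 - d/g) J_{g A1} x^1;
   Q~^i x = (d/g)(x^i - x^1) + Q~^1 x for i >= 2.
   Points of H^{N-1} are functions 'I_(N-1) -> H, index 0 being x^1. *)
Definition Qtilde1 (R : realType) (H : completeNormedModType R)
  (A1 : H -> set H) (delta gamma : R) (x1 : H) : H :=
  (delta / gamma) *: x1 + (1 - delta / gamma) *: resolvent gamma A1 x1.

Definition Qtilde (R : realType) (H : completeNormedModType R) (N : nat)
  (A1 : H -> set H) (delta gamma : R) (x : 'I_(N.-1) -> H) : 'I_(N.-1) -> H :=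
  fun i => let x1 := x (ord_first i) in
    if nat_of_ord i == 0%N then Qtilde1 A1 delta gamma x1
    else (delta / gamma) *: (x i - x1) + Qtilde1 A1 delta gamma x1.

Definition prodnorm (R : realType) (H : normedModType R) (n : nat)
  (x : 'I_n -> H) : R := Num.sqrt (\sum_(i < n) `|x i| ^+ 2).

Definition Lcheck (R : realType) (N : nat) (delta gamma : R) : R :=
  Num.sqrt delta / Num.sqrt gamma
  + Num.sqrt `|gamma - delta| / Num.sqrt gamma
    * Num.max (Num.sqrt (N%:R - 1)) (Num.sqrt (2 * N%:R) * Num.sqrt (delta / gamma)).

Arguments Qtilde {R H} N A1 delta gamma x i.
Arguments Lcheck {R} N delta gamma.

(* Every component of Q~ is (delta/gamma) x^i + (1 - delta/gamma) J x^1 with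
   J = J_{gamma A1}, so nonexpansiveness of J and a weighted AM-GM inequality give
   the Lipschitz constant delta/gamma + |1 - delta/gamma| sqrt(N-1), which is at
   most Lcheck.  As J is defined by choice, its nonexpansiveness rests on Minty's
   theorem (Id + gamma A1 is onto).  This follows from Kirszbraun's one-point
   extension theorem in a Hilbert space: for finitely many constraints it is a
   minimax argument over the simplex; in general, the functions
   q |-> |q - c|^2 - |x - s|^2 are uniformly convex, so near-minimisers of their
   finite maxima form a Cauchy sequence whose limit satisfies all constraints. *)

From HB Require Import structures.
From mathcomp Require Import all_boot all_order all_algebra.
From mathcomp Require Import all_classical all_reals all_analysis.
From mathcomp Require Import ring lra.
Import Order.TTheory GRing.Theory Num.Theory.
Import numFieldNormedType.Exports.
Local Open Scope classical_set_scope.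
Local Open Scope ring_scope.

Lemma subrDD {V : zmodType} (a b c d : V) : (a + b) - (c + d) = (a - c) + (b - d).
Proof. by rewrite opprD addrACA. Qed.

Lemma subrBB {V : zmodType} (a b c d : V) : (a - b) - (c - d) = (a - c) - (b - d).
Proof. by rewrite subrDD opprK opprB [- b + d]addrC. Qed.

Section InnerProduct.
Context {R : realType} {H : normedModType R} {ip : H -> H -> R}.
Hypothesis ipP : is_inner_product ip.

Lemma ipC x y : ip x y = ip y x.
Proof. by case: ipP. Qed.

Lemma ipxx x : ip x x = `|x| ^+ 2.
Proof. by case: ipP. Qed.

Lemma ip0l z : ip 0 z = 0.
Proof.
case: ipP => _ lin _; have := lin 1 0 0 z; rewrite scale1r addr0 mul1r => h.
by apply: (addrI (ip 0 z)); rewrite addr0 -h.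
Qed.

Lemma ipDl x y z : ip (x + y) z = ip x z + ip y z.
Proof. by case: ipP => _ lin _; have := lin 1 x y z; rewrite scale1r mul1r. Qed.

Lemma ipZl a x z : ip (a *: x) z = a * ip x z.
Proof. by case: ipP => _ lin _; rewrite -[a *: x]addr0 lin ip0l addr0. Qed.

Lemma ipNl x z : ip (- x) z = - ip x z.
Proof. by rewrite -scaleN1r ipZl mulN1r. Qed.

Lemma ipDr x y z : ip z (x + y) = ip z x + ip z y.
Proof. by rewrite !(ipC z) ipDl. Qed.

Lemma ipZr a x z : ip z (a *: x) = a * ip z x.
Proof. by rewrite !(ipC z) ipZl. Qed.

Lemma ipNr x z : ip z (- x) = - ip z x.
Proof. by rewrite !(ipC z) ipNl. Qed.

Lemma ip_suml n (f : 'I_n -> H) z : ip (\sum_(i < n) f i) z = \sum_(i < n) ip (f i) z.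
Proof. by apply: (big_morph (ip^~ z)) => [x y|]; rewrite ?ipDl ?ip0l. Qed.

Lemma ip_sumr n (f : 'I_n -> H) z : ip z (\sum_(i < n) f i) = \sum_(i < n) ip z (f i).
Proof. by rewrite ipC ip_suml; apply: eq_bigr => i _; rewrite ipC. Qed.

Lemma normD2 x y : `|x + y| ^+ 2 = `|x| ^+ 2 + 2 * ip x y + `|y| ^+ 2.
Proof. by rewrite -!ipxx ipDl !ipDr (ipC y x); ring. Qed.

Lemma normB2 x y : `|x - y| ^+ 2 = `|x| ^+ 2 - 2 * ip x y + `|y| ^+ 2.
Proof. by rewrite normD2 normrN ipNr; ring. Qed.

Lemma normDZ2 a b x y :
  `|a *: x + b *: y| ^+ 2 = a ^+ 2 * `|x| ^+ 2 + 2 * a * b * ip x y + b ^+ 2 * `|y| ^+ 2.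
Proof. by rewrite normD2 ipZl ipZr !normrZ !exprMn !real_normK ?num_real //; ring. Qed.

Lemma normD2_subB2 x y : `|x + y| ^+ 2 - `|x - y| ^+ 2 = 4 * ip x y.
Proof. by rewrite normD2 normB2; ring. Qed.

Lemma norm_midpoint2 (c q r : H) :
  `|2^-1 *: (q + r) - c| ^+ 2 = (`|q - c| ^+ 2 + `|r - c| ^+ 2) / 2 - `|q - r| ^+ 2 / 4.
Proof.
have -> : 2^-1 *: (q + r) - c = 2^-1 *: (q - c) + 2^-1 *: (r - c).
  have half2 : 2^-1 + 2^-1 = 1 :> R by rewrite [in RHS](splitr 1) mul1r.
  by rewrite !scalerBr addrACA -opprD -scalerDl half2 scale1r scalerDr.
have -> : q - r = (q - c) - (r - c) by rewrite opprB addrA subrK.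
by rewrite normDZ2 (normB2 (q - c)); field.
Qed.

Lemma sum_pair_dist2 n (l : 'I_n -> R) (v : 'I_n -> H) : \sum_(i < n) l i = 1 ->
  \sum_(k < n) \sum_(j < n) l k * l j * `|v k - v j| ^+ 2 =
  2 * (\sum_(k < n) l k * `|v k| ^+ 2 - `|\sum_(k < n) l k *: v k| ^+ 2).
Proof.
move=> l1; set A := \sum_(k < n) l k * `|v k| ^+ 2.
have sum_left : \sum_(k < n) \sum_(j < n) l k * l j * `|v k| ^+ 2 = A.
  apply: eq_bigr => k _; under eq_bigr do rewrite mulrAC.
  by rewrite -mulr_sumr l1 mulr1.
have sum_right : \sum_(k < n) \sum_(j < n) l k * l j * `|v j| ^+ 2 = A.
  rewrite exchange_big /=; apply: eq_bigr => j _.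
  under eq_bigr do rewrite (mulrC (l _)) mulrAC.
  by rewrite -mulr_sumr l1 mulr1.
have sum_ip : \sum_(k < n) \sum_(j < n) l k * l j * ip (v k) (v j)
              = `|\sum_(k < n) l k *: v k| ^+ 2.
  rewrite -ipxx ip_suml; apply: eq_bigr => k _.
  by rewrite ip_sumr; apply: eq_bigr => j _; rewrite ipZl ipZr mulrA.
transitivity (\sum_(k < n) \sum_(j < n) (l k * l j * `|v k| ^+ 2 + l k * l j * `|v j| ^+ 2
                                        - 2 * (l k * l j * ip (v k) (v j)))).
  by apply: eq_bigr => k _; apply: eq_bigr => j _; rewrite normB2; ring.
under eq_bigr do rewrite sumrB big_split -mulr_sumr /=.
by rewrite sumrB big_split -mulr_sumr /= sum_left sum_right sum_ip; ring.
Qed.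

Lemma monotone_norm_le g p1 p2 u1 u2 : 0 <= g -> 0 <= ip (p1 - p2) (u1 - u2) ->
  `|p1 - p2| <= `|(p1 + g *: u1) - (p2 + g *: u2)|.
Proof.
move=> g_ge0 mono; rewrite subrDD -scalerBr.
rewrite -(ler_pXn2r (_ : 0 < 2)%N) ?nnegrE // [leRHS]normD2 ipZr normrZ exprMn.
by rewrite -addrA lerDl addr_ge0 ?mulr_ge0 ?sqr_ge0.
Qed.

Lemma maximally_monotone_mem (A : H -> set H) p u : maximally_monotone ip A ->
  (forall y v, A y v -> 0 <= ip (y - p) (v - u)) -> A p u.
Proof.
move=> [A_mono A_max] pu_mono.
pose B y v := A y v \/ (y = p /\ v = u).
apply: (A_max B); [|by left|by right].
move=> y1 y2 v1 v2 [A1|[-> ->]] [A2|[-> ->]].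
- exact: A_mono.
- exact: pu_mono.
- by rewrite -(opprB y2) -(opprB v2) ipNl ipNr opprK pu_mono.
- by rewrite !subrr ip0l.
Qed.

Section FiniteKirszbraun.
Variables (n : nat) (c s : 'I_n -> H).
Hypothesis c_s_nonexp : forall k j, `|c k - c j| <= `|s k - s j|.

Let simplex (l : 'I_n -> R) := (forall k, 0 <= l k) /\ \sum_(k < n) l k = 1.
Let bary l := \sum_(k < n) l k *: c k.
(* [gap l] is the minimum over [q] of [\sum_k l k * (`|q - c k| ^+ 2 - `|s k| ^+ 2)],
   attained at [q = bary l]. *)
Let gap l := \sum_(k < n) l k * (`|c k| ^+ 2 - `|s k| ^+ 2) - `|bary l| ^+ 2.
Let bump (l : 'I_n -> R) (k : 'I_n) (t : R) (j : 'I_n) : R := (1 - t) * l j + t * (j == k)%:R.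

Lemma gap_le0 l : simplex l -> gap l <= 0.
Proof.
move=> [l_ge0 l1].
have pair_le : \sum_(k < n) \sum_(j < n) l k * l j * `|c k - c j| ^+ 2 <=
               \sum_(k < n) \sum_(j < n) l k * l j * `|s k - s j| ^+ 2.
  apply: ler_sum => k _; apply: ler_sum => j _.
  by rewrite ler_wpM2l ?mulr_ge0 // lerXn2r ?nnegrE.
rewrite !sum_pair_dist2 // ler_pM2l // in pair_le.
rewrite /gap; under eq_bigr do rewrite mulrBr.
have := sqr_ge0 `|\sum_(k < n) l k *: s k|.
by rewrite sumrB; lra.
Qed.

Lemma sum_bump {V : lmodType R} l k t (f : 'I_n -> V) :
  \sum_(j < n) bump l k t j *: f j = (1 - t) *: \sum_(j < n) l j *: f j + t *: f k.
Proof.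
under eq_bigr do rewrite scalerDl -!scalerA.
rewrite big_split /= -!scaler_sumr; congr (_ + t *: _).
rewrite (bigD1 k) //= eqxx scale1r big1 ?addr0 // => j /negbTE ->.
by rewrite scale0r.
Qed.

Lemma simplex_bump l k t : simplex l -> 0 <= t <= 1 -> simplex (bump l k t).
Proof.
move=> [l_ge0 l1] /andP[t_ge0 t_le1]; split=> [j|].
  by rewrite addr_ge0 ?mulr_ge0 ?ler0n ?subr_ge0.
rewrite big_split /= -!mulr_sumr l1 (bigD1 k) //= eqxx big1 => [|j /negbTE -> //].
by rewrite addr0 !mulr1 subrK.
Qed.

Lemma gap_bump l k t : \sum_(j < n) l j = 1 ->
  gap (bump l k t) = gap l + t * (`|bary l - c k| ^+ 2 - `|s k| ^+ 2 - gap l)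
                     - t ^+ 2 * `|c k - bary l| ^+ 2.
Proof.
move=> l1.
have sum_bump_mul (f : 'I_n -> R) : \sum_(j < n) bump l k t j * f j =
    (1 - t) * \sum_(j < n) l j * f j + t * f k := sum_bump l k t (f : 'I_n -> R^o).
rewrite /gap /bary (sum_bump _ _ _ c) sum_bump_mul.
by rewrite normDZ2 !normB2 (ipC (c k)); ring.
Qed.

Lemma dist_bary_le l k : simplex l -> `|c k - bary l| <= \sum_(j < n) `|c k - c j|.
Proof.
move=> [l_ge0 l1].
have -> : c k - bary l = \sum_(j < n) l j *: (c k - c j).
  by under eq_bigr do rewrite scalerBr; rewrite sumrB -scaler_suml l1 scale1r.
apply: le_trans (ler_norm_sum _ _ _) _; apply: ler_sum => j _.
rewrite normrZ ger0_norm // ler_piMl // -l1 (bigD1 j) //= lerDl.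
exact: sumr_ge0.
Qed.

(* [bary l] works for a near-maximiser [l] of [gap]: moving [l] towards the vertex
   [k] cannot push [gap] above its supremum, and [gap_bump] turns this into a bound
   on the [k]-th constraint at [bary l]. *)
Lemma finite_kirszbraun e : 0 < e ->
  exists q, forall k, `|q - c k| ^+ 2 - `|s k| ^+ 2 <= e.
Proof.
move=> e_gt0; have [n0|n_gt0] := posnP n.
  by exists 0 => k; suff : (k < 0)%N by []; rewrite -n0.
pose d := \sum_(k < n) \sum_(j < n) `|c k - c j|.
pose D := d ^+ 2 + e.
have d2_ge0 : 0 <= d ^+ 2 := sqr_ge0 d.
have D_gt0 : 0 < D by rewrite ltr_wpDl.
have supS : has_sup [set gap l | l in simplex].
  split; last by exists 0 => _ [l l_simplex <-]; exact: gap_le0.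
  pose k0 := Ordinal n_gt0; exists (gap (fun j => (j == k0)%:R)).
  exists (fun j => (j == k0)%:R) => //; split=> [j|]; first exact: ler0n.
  by rewrite (bigD1 k0) //= ?eqxx big1 ?addr0 // => j /negbTE ->.
pose eta := e ^+ 2 / (4 * D).
have eta_gt0 : 0 < eta by rewrite divr_gt0 ?exprn_gt0 ?mulr_gt0.
have [_ [l l_simplex <-] gap_l] := sup_adherent eta_gt0 supS.
exists (bary l) => k.
pose t := e / (2 * D).
have t_gt0 : 0 < t by rewrite divr_gt0 ?mulr_gt0.
have t_le1 : t <= 1 by rewrite ler_pdivrMr ?mulr_gt0 // mul1r /D; lra.
have gap_bump_le : gap (bump l k t) <= sup [set gap l | l in simplex].
  apply: sup_upper_bound => //; exists (bump l k t) => //.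
  by apply: simplex_bump; rewrite ?(ltW t_gt0).
rewrite gap_bump in gap_bump_le; last by case: l_simplex.
have dist_le : `|c k - bary l| ^+ 2 <= D.
  have d_ge0 : 0 <= d by rewrite sumr_ge0 // => i _; rewrite sumr_ge0.
  have : `|c k - bary l| <= d.
    apply: le_trans (dist_bary_le _ k l_simplex) _.
    by rewrite /d [leRHS](bigD1 k) //= lerDl sumr_ge0 // => i _; rewrite sumr_ge0.
  by move/(lerXn2r 2); rewrite !nnegrE /D => /(_ (normr_ge0 _) d_ge0); lra.
have gap_le := gap_le0 _ l_simplex.
have eta_tD : eta + t ^+ 2 * D = t * e by rewrite /eta /t; field; lra.
suff : t * (`|bary l - c k| ^+ 2 - `|s k| ^+ 2) < t * e by rewrite ltr_pM2l // => /ltW.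
have : t ^+ 2 * `|c k - bary l| ^+ 2 <= t ^+ 2 * D by rewrite ler_wpM2l ?sqr_ge0.
have : t * gap l <= 0 by rewrite pmulr_rle0.
rewrite mulrBr in gap_bump_le; lra.
Qed.

End FiniteKirszbraun.

End InnerProduct.

Lemma continuous_le0_approx {R : realType} {V : normedModType R} (f : V -> R) x :
  {for x, continuous f} ->
  (forall e, 0 < e -> exists2 y, `|x - y| < e & f y <= e) -> f x <= 0.
Proof.
move=> f_cont approx; apply/ler_addgt0Pr => e e_gt0; rewrite add0r.
have e2_gt0 : 0 < e / 2 by rewrite divr_gt0.
have [d /= d_gt0 f_near] := (nbhs_normP _ _).1 ((cvgrPdist_lt _ _).1 f_cont _ e2_gt0).
have [|y xy fy] := approx (Num.min d (e / 2)); first by rewrite lt_min d_gt0.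
have /f_near : ball_ Num.norm x d y by move: xy; rewrite /ball_ /= lt_min => /andP[].
move=> /= fxy; move: fy; rewrite le_min => /andP[_ fy].
have := ler_norm (f x - f y); lra.
Qed.

Section CommonSublevelPoint.
Context {R : realType} {H : completeNormedModType R} {I : eqType}.
Variables (P : set I) (h : I -> H -> R) (i0 : I).
Hypothesis P_i0 : P i0.
Hypothesis h_i0_lbound : has_lbound (range (h i0)).
Hypothesis h_cont : forall i, continuous (h i).
Hypothesis h_midpoint : forall i q r,
  h i (2^-1 *: (q + r)) <= (h i q + h i r) / 2 - `|q - r| ^+ 2 / 4.
Hypothesis h_finite : forall s : seq I, (forall i, i \in s -> P i) ->
  forall e, 0 < e -> exists q, forall i, i \in s -> h i q <= e.

Let admissible (s : seq I) := forall i, i \in s -> P i.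
Let hmax (s : seq I) (q : H) := \big[Num.max/h i0 q]_(i <- s) h i q.
Let Vinf (s : seq I) := inf (range (hmax s)).

Lemma hmax_ge s q i : i \in i0 :: s -> h i q <= hmax s q.
Proof.
by rewrite inE => /predU1P[->|si]; [exact: bigmax_ge_id | exact: le_bigmax_seq].
Qed.

Lemma hmax_le s q e : (forall i, i \in i0 :: s -> h i q <= e) -> hmax s q <= e.
Proof.
move=> h_le; rewrite /hmax big_seq; apply: bigmax_le => [|i si].
  exact/h_le/mem_head.
by apply: h_le; rewrite inE si orbT.
Qed.

Lemma hmax_sub s t q : {subset s <= t} -> hmax s q <= hmax t q.
Proof.
move=> st; apply: hmax_le => i; rewrite inE => /predU1P[->|si]; apply: hmax_ge.
  exact: mem_head.
by rewrite inE st ?orbT.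
Qed.

Lemma hmax_midpoint s q r :
  hmax s (2^-1 *: (q + r)) <= (hmax s q + hmax s r) / 2 - `|q - r| ^+ 2 / 4.
Proof.
apply: hmax_le => i si; have := h_midpoint i q r.
by have := hmax_ge _ q _ si; have := hmax_ge _ r _ si; lra.
Qed.

Lemma hmax_lbound s : has_lbound (range (hmax s)).
Proof.
have [m m_lb] := h_i0_lbound; exists m => _ [q _ <-].
exact: le_trans (m_lb _ (imageT _ q)) (hmax_ge _ _ _ (mem_head _ _)).
Qed.

Lemma Vinf_le s q : Vinf s <= hmax s q.
Proof. by apply: ge_inf; [exact: hmax_lbound | exists q]. Qed.

Lemma Vinf_adherent s e : 0 < e -> exists q, hmax s q <= Vinf s + e.
Proof.
move=> e_gt0; have range_n0 : range (hmax s) !=set0 by exists (hmax s 0), 0.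
by have [_ [q _ <-] /ltW] := inf_adherent e_gt0 (conj range_n0 (hmax_lbound s)); exists q.
Qed.

Lemma Vinf_le0 s : admissible s -> Vinf s <= 0.
Proof.
move=> s_adm; apply/ler_addgt0Pr => e e_gt0; rewrite add0r.
have [|q q_le] := h_finite (i0 :: s) _ _ e_gt0.
  by move=> i; rewrite inE => /predU1P[->|/s_adm].
exact: le_trans (Vinf_le s q) (hmax_le _ _ _ q_le).
Qed.

Lemma near_min_dist {s t q r e} : {subset s <= t} ->
  hmax s q <= Vinf s + e -> hmax t r <= Vinf t + e ->
  `|q - r| ^+ 2 <= 2 * (Vinf t - Vinf s) + 4 * e.
Proof.
move=> st q_min r_min; have := hmax_midpoint s q r.
have := Vinf_le s (2^-1 *: (q + r)); have := hmax_sub _ _ r st; lra.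
Qed.

Let M := sup [set Vinf s | s in admissible].

Let has_sup_Vinf : has_sup [set Vinf s | s in admissible].
Proof.
split; first by exists (Vinf [::]), [::].
by exists 0 => _ [t t_adm <-]; exact: Vinf_le0.
Qed.

Lemma Vinf_le_sup {s} : admissible s -> Vinf s <= M.
Proof. by move=> s_adm; apply: sup_upper_bound => //; exists s. Qed.

Let near_opt e s q := [/\ admissible s, M - e < Vinf s & hmax s q <= Vinf s + e].

Lemma near_opt_exists e : 0 < e -> exists sq, near_opt e sq.1 sq.2.
Proof.
move=> e_gt0; have [_ [s s_adm <-] sM] := sup_adherent e_gt0 has_sup_Vinf.
by have [q q_min] := Vinf_adherent s _ e_gt0; exists (s, q).
Qed.

Lemma near_opt_dist {e e' s q t r} : near_opt e s q -> e <= e' ->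
  admissible t -> {subset s <= t} -> hmax t r <= Vinf t + e' -> `|q - r| ^+ 2 <= 6 * e'.
Proof.
move=> [_ sM q_min] ee' t_adm st r_min.
have q_min' : hmax s q <= Vinf s + e' by apply: le_trans q_min _; rewrite lerD2l.
have := near_min_dist st q_min' r_min; have := Vinf_le_sup t_adm; lra.
Qed.

Lemma near_opt_gt0 {e s q} : near_opt e s q -> 0 < e.
Proof. by move=> [s_adm sM _]; have := Vinf_le_sup s_adm; lra. Qed.

Lemma near_opt_dist2 {e e' s s' q q'} : near_opt e s q -> near_opt e' s' q' ->
  `|q - q'| ^+ 2 <= 24 * (e + e').
Proof.
move=> opt opt'; have [s_adm _ _] := opt; have [s'_adm _ _] := opt'.
have e_gt0 := near_opt_gt0 opt; have e'_gt0 := near_opt_gt0 opt'.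
have t_adm : admissible (s ++ s') by move=> i; rewrite mem_cat => /orP[/s_adm|/s'_adm].
have [r r_min] := Vinf_adherent (s ++ s') _ (addr_gt0 e_gt0 e'_gt0).
have q_r : `|q - r| ^+ 2 <= 6 * (e + e').
  apply: near_opt_dist opt _ t_adm _ r_min; first by rewrite lerDl ltW.
  by move=> i si; rewrite mem_cat si.
have q'_r : `|q' - r| ^+ 2 <= 6 * (e + e').
  apply: near_opt_dist opt' _ t_adm _ r_min; first by rewrite lerDr ltW.
  by move=> i si; rewrite mem_cat si orbT.
have := ler_distD r q q'; rewrite (distrC r q').
have := sqr_ge0 (`|q - r| - `|q' - r|).
have := normr_ge0 (q - q'); nra.
Qed.

(* Near-optimal points for the tolerances [1/(n+1)] form a Cauchy sequence by
   [near_opt_dist2]; at its limit, each constraint [i] is approximated by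
   near-minimisers for the lists extended by [i]. *)
Lemma common_sublevel_point : exists q, forall i, P i -> h i q <= 0.
Proof.
pose e n : R := n.+1%:R^-1.
have e_gt0 n : 0 < e n by rewrite invr_gt0.
have e_small c : 0 < c -> \forall n \near \oo, e n < c.
  by move=> c_gt0; exact: (near_infty_natSinv_lt (PosNum c_gt0)).
have [f f_opt] := choice (fun n => near_opt_exists _ (e_gt0 n)).
pose qs n := (f n).2.
have qs_cvg : qs @ \oo --> limn qs.
  apply: cauchy_cvg; apply: cauchy_exP => eps eps_gt0.
  have eps2_gt0 : 0 < eps ^+ 2 / 48 by rewrite divr_gt0 ?exprn_gt0.
  have [N _ eN] := e_small _ eps2_gt0.
  exists (qs N); exists N => // n Nn; rewrite -ball_normE /=.
  rewrite -(ltr_pXn2r (_ : 0 < 2)%N) ?nnegrE //; last exact: ltW.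
  apply: le_lt_trans (near_opt_dist2 (f_opt N) (f_opt n)) _.
  by have := eN N (leqnn N); have := eN n Nn; lra.
exists (limn qs) => i Pi.
apply: continuous_le0_approx (h_cont i (limn qs)) _ => eps eps_gt0.
have eps2_gt0 : 0 < eps / 2 by rewrite divr_gt0.
near \oo => n.
have [s_adm _ _] := f_opt n.
have t_adm : admissible ((f n).1 ++ [:: i]).
  by move=> j; rewrite mem_cat inE => /orP[/s_adm|/eqP->].
have [r r_min] := Vinf_adherent ((f n).1 ++ [:: i]) _ (e_gt0 n).
have qs_r : `|qs n - r| ^+ 2 <= 6 * e n.
  by apply: near_opt_dist (f_opt n) (lexx _) t_adm _ r_min => j sj; rewrite mem_cat sj.
exists r.
  apply: le_lt_trans (ler_distD (qs n) _ _) _; rewrite [ltRHS]splitr ltrD //.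
    by near: n; apply: (cvgrPdist_lt _ _).1 qs_cvg _ eps2_gt0.
  rewrite -(ltr_pXn2r (_ : 0 < 2)%N) ?nnegrE //; last exact: ltW.
  apply: le_lt_trans qs_r _; rewrite -ltr_pdivlMl //.
  by near: n; apply: e_small; rewrite mulr_gt0 ?exprn_gt0.
have i_in : i \in i0 :: ((f n).1 ++ [:: i]) by rewrite inE mem_cat mem_seq1 eqxx !orbT.
apply: le_trans (hmax_ge _ r i i_in) _.
apply: le_trans r_min _; have := Vinf_le0 _ t_adm.
suff : e n <= eps by lra.
by apply/ltW; near: n; exact: e_small.
Unshelve. all: by end_near.
Qed.

End CommonSublevelPoint.

Lemma continuous_sqr_dist {R : realType} {V : normedModType R} (c : V) (k : R) :
  continuous (fun q : V => `|q - c| ^+ 2 - k).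
Proof.
move=> q; apply: cvgB; last exact: cvg_cst.
have dist_cvg : `|x - c| @[x --> q] --> `|q - c|.
  by apply: cvg_norm; apply: cvgB; [exact: cvg_id | exact: cvg_cst].
exact: (cvgM dist_cvg dist_cvg).
Qed.

Section Resolvent.
Context {R : realType} {H : completeNormedModType R} {ip : H -> H -> R}.
Hypothesis ipP : is_inner_product ip.

(* Kirszbraun's theorem for one new point: the nonexpansive map [z.2 |-> z.1]
   extends to [x]. *)
Lemma kirszbraun_point (P : set (H * H)) x :
  (forall z w, P z -> P w -> `|z.1 - w.1| <= `|z.2 - w.2|) ->
  exists q, forall z, P z -> `|q - z.1| <= `|x - z.2|.
Proof.
move=> P_nonexp.
have [[z0 P_z0]|P0] := pselect (exists z, P z); last first.
  by exists 0 => z Pz; exfalso; apply: P0; exists z.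
pose h (z : H * H) q := `|q - z.1| ^+ 2 - `|x - z.2| ^+ 2.
have [||||q q_le] := common_sublevel_point P h z0 P_z0.
- exists (- `|x - z0.2| ^+ 2) => _ [q _ <-].
  by rewrite /h lerBrDr addNr sqr_ge0.
- by move=> z; exact: continuous_sqr_dist.
- by move=> z q r; rewrite /h (norm_midpoint2 ipP); lra.
- move=> s s_adm e e_gt0.
  pose c k := (nth z0 s k).1; pose d k := x - (nth z0 s k).2.
  have [|q q_le] := finite_kirszbraun ipP (size s) c d _ e e_gt0.
    move=> k j; have -> : d k - d j = (nth z0 s j).2 - (nth z0 s k).2.
      by rewrite /d opprB addrC subrKA.
    rewrite distrC.
    by apply: P_nonexp; apply: s_adm; rewrite mem_nth.
  exists q => z zs; have zi : (index z s < size s)%N by rewrite index_mem.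
  by have := q_le (Ordinal zi); rewrite /c /d /= nth_index.
exists q => z Pz; have := q_le z Pz; rewrite /h subr_le0.
by rewrite (ler_pXn2r (_ : 0 < 2)%N) ?nnegrE.
Qed.

(* By monotonicity [y + g v |-> y - g v] is nonexpansive on the
   graph of [A]; if [q] is its value at [x], then [p = (x + q) / 2] and
   [u = (x - q) / (2 g)] are monotonically related to the whole graph, so [A p u]
   by maximality. *)
Lemma resolvent_exists (A : H -> set H) g x : maximally_monotone ip A -> 0 < g ->
  exists p, exists2 u, A p u & x = p + g *: u.
Proof.
move=> A_max g_gt0.
have polar y v p u : `|(y + g *: v) - (p + g *: u)| ^+ 2 - `|(y - g *: v) - (p - g *: u)| ^+ 2
                     = 4 * g * ip (y - p) (v - u).
  by rewrite subrDD subrBB -!scalerBr (normD2_subB2 ipP) (ipZr ipP) mulrA.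
pose P := [set z : H * H | exists y v, A y v /\ z = (y - g *: v, y + g *: v)].
have [|q q_le] := kirszbraun_point P x.
  move=> _ _ [y [v [Ayv ->]]] [y' [v' [Ayv' ->]]] /=.
  rewrite -(ler_pXn2r (_ : 0 < 2)%N) ?nnegrE // -subr_ge0 polar.
  by rewrite !mulr_ge0 ?(ltW g_gt0) //; case: A_max => A_mono _; exact: A_mono.
pose u := (2 * g)^-1 *: (x - q); pose p := x - g *: u.
have gu2 : g *: u + g *: u = x - q.
  rewrite /u -scalerDl scalerA (_ : (g + g) / (2 * g) = 1) ?scale1r //.
  by field; rewrite gt_eqF.
have pgu : p - g *: u = q by rewrite /p -addrA -opprD gu2 opprB subrKC.
exists p, u; last by rewrite /p subrK.
apply: (maximally_monotone_mem ipP) => // y v Ayv.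
have := q_le (y - g *: v, y + g *: v) (ex_intro _ y (ex_intro _ v (conj Ayv erefl))).
rewrite /= -(ler_pXn2r (_ : 0 < 2)%N) ?nnegrE // -subr_ge0 distrC [`|q - _|]distrC.
by rewrite -pgu -{1}(subrK (g *: u) x) -/p polar pmulr_rge0 ?mulr_gt0.
Qed.

Lemma resolvent_spec (A : H -> set H) g x : maximally_monotone ip A -> 0 < g ->
  exists2 u, A (resolvent g A x) u & x = resolvent g A x + g *: u.
Proof. by move=> A_max g_gt0; exact: (xgetPex 0 (resolvent_exists _ _ x A_max g_gt0)). Qed.

Lemma resolvent_nonexpansive (A : H -> set H) g x y : maximally_monotone ip A -> 0 < g ->
  `|resolvent g A x - resolvent g A y| <= `|x - y|.
Proof.
move=> A_max g_gt0.
move: (resolvent_spec _ _ x A_max g_gt0) (resolvent_spec _ _ y A_max g_gt0).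
move: (resolvent g A x) (resolvent g A y) => p p' [u Au ->] [u' Au' ->].
apply: (monotone_norm_le ipP); first exact: ltW.
by case: A_max => A_mono _; exact: A_mono.
Qed.

End Resolvent.

Section RealBounds.
Context {R : realType}.
Implicit Types a b r t w : R.

(* Weighted AM-GM: [(a v + b w)^2 <= (a^2 + a b r) v^2 + (a b / r + b^2) w^2]. *)
Lemma sum_sqr_affine_le m (v : 'I_m -> R) a b w : (0 < m)%N ->
  0 <= a -> 0 <= b -> 0 <= w -> w ^+ 2 <= \sum_(i < m) v i ^+ 2 ->
  \sum_(i < m) (a * v i + b * w) ^+ 2 <= (a + b * Num.sqrt m%:R) ^+ 2 * \sum_(i < m) v i ^+ 2.
Proof.
move=> m_gt0 a_ge0 b_ge0 w_ge0 w_le; set r := Num.sqrt m%:R; set E := \sum_(i < m) v i ^+ 2.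
have r_gt0 : 0 < r by rewrite sqrtr_gt0 ltr0n.
have r2 : r ^+ 2 = m%:R by rewrite sqr_sqrtr.
have amgm i : (a * v i + b * w) ^+ 2 <=
    (a ^+ 2 + a * b * r) * v i ^+ 2 + (a * b / r + b ^+ 2) * w ^+ 2.
  rewrite -subr_ge0 (_ : _ - _ = a * b / r * (r * v i - w) ^+ 2).
    by rewrite mulr_ge0 ?sqr_ge0 ?divr_ge0 ?mulr_ge0 ?(ltW r_gt0).
  by field; rewrite gt_eqF.
apply: le_trans (ler_sum _ (fun i _ => amgm i)) _.
rewrite big_split /= -mulr_sumr sumr_const card_ord -mulr_natl -r2.
have -> : r ^+ 2 * ((a * b / r + b ^+ 2) * w ^+ 2) = (a * b * r + r ^+ 2 * b ^+ 2) * w ^+ 2.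
  by field; rewrite gt_eqF.
have -> : (a + b * r) ^+ 2 * E = (a ^+ 2 + a * b * r) * E + (a * b * r + r ^+ 2 * b ^+ 2) * E.
  by ring.
by rewrite lerD2l ler_wpM2l // addr_ge0 ?mulr_ge0 ?sqr_ge0 // ltW.
Qed.

Lemma sqrtr_ge_id t : 0 <= t <= 1 -> t <= Num.sqrt t.
Proof.
move=> /andP[t_ge0 t_le1]; have st_le1 : Num.sqrt t <= 1 by rewrite -sqrtr1 ler_sqrt.
by rewrite -{1}(sqr_sqrtr t_ge0) expr2 ler_piMl ?sqrtr_ge0.
Qed.

Lemma le_sqrt_add_sqrt_max a r S : 0 <= a -> 0 <= r -> 0 <= S -> S ^+ 2 = 2 * (r ^+ 2 + 1) ->
  a + `|1 - a| * r <= Num.sqrt a + Num.sqrt `|1 - a| * Num.max r (S * Num.sqrt a).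
Proof.
move=> a_ge0 r_ge0 S_ge0 S2.
have sa_ge0 := sqrtr_ge0 a; have sa2 := sqr_sqrtr a_ge0.
have [a_le1|a_gt1] := lerP a 1.
  have b_ge0 : 0 <= 1 - a by rewrite subr_ge0.
  have sa : a <= Num.sqrt a by rewrite sqrtr_ge_id ?a_ge0.
  have sb : 1 - a <= Num.sqrt (1 - a) by rewrite sqrtr_ge_id ?b_ge0 ?gerBl.
  have : (1 - a) * r <= Num.sqrt (1 - a) * Num.max r (S * Num.sqrt a).
    by rewrite (le_trans (ler_wpM2r r_ge0 sb)) // ler_wpM2l ?sqrtr_ge0 // le_max lexx.
  lra.
have b_ge0 : 0 <= a - 1 by rewrite subr_ge0 ltW.
have sb_ge0 := sqrtr_ge0 (a - 1); have sb2 := sqr_sqrtr b_ge0.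
apply: (@le_trans _ _ (Num.sqrt a + Num.sqrt (a - 1) * (S * Num.sqrt a))); last first.
  by rewrite lerD2l ler_wpM2l // le_max lexx orbT.
rewrite -(ler_pXn2r (_ : 0 < 2)%N) ?nnegrE ?addr_ge0 ?mulr_ge0 //.
move: sa_ge0 sa2 sb_ge0 sb2; move: (Num.sqrt a) (Num.sqrt (a - 1)) => sa sb sa_ge0 sa2 sb_ge0 sb2.
have -> : (sa + sb * (S * sa)) ^+ 2 = a + 2 * a * (sb * S) + 2 * (r ^+ 2 + 1) * a * (a - 1).
  by rewrite -S2 -sb2 -sa2; ring.
have : 0 <= (a - 1) * (a * (r - 1) ^+ 2 + r ^+ 2).
  by rewrite mulr_ge0 // addr_ge0 ?sqr_ge0 // mulr_ge0 ?sqr_ge0.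
have : 0 <= 2 * a * (sb * S) by rewrite !mulr_ge0.
lra.
Qed.

End RealBounds.

Lemma prodnorm_ge0 {R : realType} {H : normedModType R} n (v : 'I_n -> H) : 0 <= prodnorm v.
Proof. exact: sqrtr_ge0. Qed.

Lemma normr_le_prodnorm {R : realType} {H : normedModType R} n (v : 'I_n -> H) i :
  `|v i| <= prodnorm v.
Proof.
rewrite -(ler_pXn2r (_ : 0 < 2)%N) ?nnegrE ?prodnorm_ge0 // sqr_sqrtr ?sumr_ge0 //.
by rewrite (bigD1 i) //= lerDl sumr_ge0.
Qed.

Lemma prodnorm_affine_le {R : realType} {H : normedModType R} m (v : 'I_m -> H) (w : H) a b :
  (0 < m)%N -> 0 <= a -> `|w| <= prodnorm v ->
  prodnorm (fun i => a *: v i + b *: w) <= (a + `|b| * Num.sqrt m%:R) * prodnorm v.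
Proof.
move=> m_gt0 a_ge0 w_le; set E := \sum_(i < m) `|v i| ^+ 2.
have E_ge0 : 0 <= E by rewrite sumr_ge0 // => i _; rewrite sqr_ge0.
have C_ge0 : 0 <= a + `|b| * Num.sqrt m%:R by rewrite addr_ge0 ?mulr_ge0 ?sqrtr_ge0.
rewrite /prodnorm -/E -(ger0_norm C_ge0) -sqrtr_sqr -sqrtrM ?sqr_ge0 // ler_sqrt ?mulr_ge0 ?sqr_ge0 //.
have w2_le : `|w| ^+ 2 <= E.
  by move: w_le; rewrite -(ler_pXn2r (_ : 0 < 2)%N) ?nnegrE ?prodnorm_ge0 // sqr_sqrtr.
apply: le_trans _ (sum_sqr_affine_le _ _ _ _ _ m_gt0 a_ge0 (normr_ge0 b) (normr_ge0 w) w2_le).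
apply: ler_sum => i _; rewrite lerXn2r ?nnegrE ?addr_ge0 ?mulr_ge0 //.
by rewrite -[a in a * _](ger0_norm a_ge0) -!normrZ ler_normD.
Qed.

Section Qtilde.
Context {R : realType} {H : completeNormedModType R}.
Variables (N : nat) (A1 : H -> set H) (delta gamma : R).

Lemma Qtilde1_sub x1 y1 :
  Qtilde1 A1 delta gamma x1 - Qtilde1 A1 delta gamma y1 =
  (delta / gamma) *: (x1 - y1) + (1 - delta / gamma) *: (resolvent gamma A1 x1 - resolvent gamma A1 y1).
Proof. by rewrite /Qtilde1 subrDD -!scalerBr. Qed.

Lemma Qtilde_sub (x y : 'I_N.-1 -> H) i :
  let x1 := x (ord_first i) in let y1 := y (ord_first i) in
  Qtilde N A1 delta gamma x i - Qtilde N A1 delta gamma y i =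
  (delta / gamma) *: (x i - y i) + (1 - delta / gamma) *: (resolvent gamma A1 x1 - resolvent gamma A1 y1).
Proof.
rewrite /Qtilde /=; case: eqP => [i0|_].
  have -> : ord_first i = i by apply: val_inj; rewrite /= i0.
  exact: Qtilde1_sub.
by rewrite subrDD Qtilde1_sub addrA -scalerBr -scalerDr subrBB subrK.
Qed.

End Qtilde.

Lemma Lcheck_ge {R : realType} N (delta gamma : R) : (0 < N)%N -> 0 < delta -> 0 < gamma ->
  delta / gamma + `|1 - delta / gamma| * Num.sqrt (N.-1)%:R <= Lcheck N delta gamma.
Proof.
move=> N_gt0 delta_gt0 gamma_gt0.
have N1 : N%:R - 1 = (N.-1)%:R :> R by rewrite -[in LHS](prednK N_gt0) mulrSr addrK.
have sqrt_div a : 0 <= a -> Num.sqrt a / Num.sqrt gamma = Num.sqrt (a / gamma).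
  by move=> a_ge0; rewrite sqrtrM ?sqrtrV // ltW.
have norm_div : `|gamma - delta| / gamma = `|1 - delta / gamma|.
  by rewrite -(gtr0_norm gamma_gt0) -normf_div gtr0_norm // mulrBl mulfV ?gt_eqF.
rewrite /Lcheck sqrt_div ?(ltW delta_gt0) // sqrt_div // norm_div N1.
apply: le_sqrt_add_sqrt_max; rewrite ?sqrtr_ge0 ?divr_ge0 ?(ltW delta_gt0) ?(ltW gamma_gt0) //.
by rewrite sqr_sqrtr ?mulr_ge0 // sqr_sqrtr // -N1; ring.
Qed.

Theorem lemma5p3 (R : realType) (H : completeNormedModType R)
  (ip : H -> H -> R) (N : nat) (A1 : H -> set H) (delta gamma : R) :
  is_inner_product ip -> (2 <= N)%N -> maximally_monotone ip A1 ->
  0 < delta -> 0 < gamma ->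
  forall x y : 'I_(N.-1) -> H,
    prodnorm (fun i => Qtilde N A1 delta gamma x i - Qtilde N A1 delta gamma y i)
    <= Lcheck N delta gamma * prodnorm (fun i => x i - y i).
Proof.
move=> ipP N_ge2 A1_max delta_gt0 gamma_gt0 x y.
have m_gt0 : (0 < N.-1)%N by rewrite -subn1 subn_gt0.
pose i0 : 'I_N.-1 := Ordinal m_gt0.
have first_i0 (i : 'I_N.-1) : ord_first i = i0 by apply: val_inj.
set dJ := resolvent gamma A1 (x i0) - resolvent gamma A1 (y i0).
have -> : (fun i => Qtilde N A1 delta gamma x i - Qtilde N A1 delta gamma y i) =
          (fun i => (delta / gamma) *: (x i - y i) + (1 - delta / gamma) *: dJ).
  by apply: funext => i; rewrite Qtilde_sub /= first_i0.
have dJ_le : `|dJ| <= prodnorm (fun i => x i - y i).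
  apply: le_trans (resolvent_nonexpansive ipP _ _ _ _ A1_max gamma_gt0) _.
  exact: (normr_le_prodnorm _ (fun i => x i - y i) i0).
apply: le_trans (prodnorm_affine_le _ _ _ _ _ m_gt0 _ dJ_le) _.
  by rewrite divr_ge0 ?ltW.
rewrite ler_wpM2r ?prodnorm_ge0 // Lcheck_ge //.
exact: leq_trans N_ge2.
Qed.
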